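(* Let $1\le k<n$. Let $G$ be a simple graph on $n$ vertices (identified with its $n\times n$ binary adjacency matrix, with graph state $|G\rangle$ on $n$ qubits), and let $\Gamma$ be a $k\times n$ binary matrix. Define the linear map $\mathcal{E}_{G,\Gamma}:(\mathbb{C}^2)^{\otimes k}\to(\mathbb{C}^2)^{\otimes n}$ by $\mathcal{E}_{G,\Gamma}|x\rangle = Z^{x\Gamma}|G\rangle$ for $x\in\mathbb{F}_2^k$ (row vector, $x\Gamma\in\mathbb{F}_2^n$ computed mod 2, $Z^{c}=\bigotimes_j Z^{c_j}$); this is the linear map of the graph-like ZX-diagram with $k$ input Z-spiders, $n$ output Z-spiders, Hadamard edges between inputs and outputs given by the bi-adjacency matrix $\Gamma$ and Hadamard edges among outputs given by $G$. Let $C$ be any $k$-qubit Clifford unitary and $L_c$ any tensor product of $n$ single-qubit Clifford unitaries, and set $\mathcal{E}=L_c\,\mathcal{E}_{G,\Gamma}\,C$. Then $\mathcal{E}$ is a valid stabilizer encoder (i.e., up to a nonzero scalar it is an isometry, mapping distinct input basis states to distinct orthonormal encoded states, whose image is the $2^k$-dimensional codespace of an $[[n,k]]$ stabilizer code) if and only if $\Gamma$ has rank $k$ over $\mathbb{F}_2$.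
   Context: The graph state is $|G\rangle=\prod_{(u,v)\in E(G)}\mathrm{CZ}_{u,v}|+\rangle^{\otimes n}$. An $[[n,k]]$ stabilizer code's codespace is the common $+1$ eigenspace of an abelian subgroup of the $n$-qubit Pauli group not containing $-I$, generated by $n-k$ independent elements. The Clifford group is the normalizer of the Pauli group in the unitary group. *)

From mathcomp Require Import all_boot all_order all_algebra.
From mathcomp Require Import algC.
Unset Printing Implicit Defensive.
Import GRing.Theory Num.Theory.
Local Open Scope ring_scope.

(* Computational basis of n qubits: indices i : 'I_(2^n); qubit j of the
   basis state i is the j-th binary digit of i. *)
Definition bit {n : nat} (i : 'I_(2 ^ n)) (j : 'I_n) : bool := odd (i %/ 2 ^ j).
Definition bitord {n : nat} (i : 'I_(2 ^ n)) (j : 'I_n) : 'I_2 := inord (bit i j).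

Definition bits_rv {k : nat} (x : 'I_(2 ^ k)) : 'rV['F_2]_k :=
  \row_j (bit x j)%:R.

Definition tens {n : nat} (U : 'I_n -> 'M[algC]_2) : 'M[algC]_(2 ^ n) :=
  \matrix_(a, b) \prod_(j < n) U j (bitord a j) (bitord b j).

Definition adjmx {m p : nat} (A : 'M[algC]_(m, p)) : 'M[algC]_(p, m) :=
  (map_mx Num.conj A)^T.

Definition unitary {m : nat} (U : 'M[algC]_m) : Prop := adjmx U *m U = 1%:M.

Definition Xm : 'M[algC]_2 := \matrix_(i, j) (i != j)%:R.
Definition Zm : 'M[algC]_2 := \matrix_(i, j) ((i == j)%:R * (-1) ^+ i).
Definition Ym : 'M[algC]_2 := 'i *: (Xm *m Zm).

Definition pauli1 (P : 'M[algC]_2) : Prop :=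
  P = 1%:M \/ P = Xm \/ P = Ym \/ P = Zm.

Definition pauli (n : nat) (P : 'M[algC]_(2 ^ n)) : Prop :=
  exists (c : nat) (Ps : 'I_n -> 'M[algC]_2),
    (forall j, pauli1 (Ps j)) /\ P = 'i ^+ c *: tens Ps.

Definition clifford (n : nat) (U : 'M[algC]_(2 ^ n)) : Prop :=
  unitary U /\
  forall P, pauli n P ->
    pauli n (U *m P *m adjmx U) /\ pauli n (adjmx U *m P *m U).

Definition Zpow {n : nat} (c : 'rV['F_2]_n) : 'M[algC]_(2 ^ n) :=
  tens (fun j => if c 0 j == 1 then Zm else 1%:M).

Definition CZ {n : nat} (u v : 'I_n) : 'M[algC]_(2 ^ n) :=
  \matrix_(a, b) ((a == b)%:R * (if bit a u && bit a v then -1 else 1)).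

Definition plus_state (n : nat) : 'cV[algC]_(2 ^ n) :=
  const_mx ((sqrtC 2) ^- n).

Definition simple_graph {n : nat} (G : 'M['F_2]_n) : Prop :=
  G^T = G /\ forall i, G i i = 0.

Definition graph_state {n : nat} (G : 'M['F_2]_n) : 'cV[algC]_(2 ^ n) :=
  (\prod_(u < n) \prod_(v < n | (u < v)%N && (G u v == 1)) CZ u v) *m plus_state n.

Definition enc {n k : nat} (G : 'M['F_2]_n) (Gam : 'M['F_2]_(k, n))
  : 'M[algC]_(2 ^ n, 2 ^ k) :=
  \matrix_(s, x) (Zpow (bits_rv x *m Gam) *m graph_state G) s 0.

(* Group generated by a list of (invertible, finite-order) Pauli matrices:
   all finite products of generators. *)
Definition gen_group {n : nat} (g : seq 'M[algC]_(2 ^ n)) (M : 'M[algC]_(2 ^ n)) : Prop :=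
  exists s : seq nat, all (fun i => (i < size g)%N) s /\
    M = \prod_(i <- s) g`_i.

Definition rem_nth {T : Type} (i : nat) (s : seq T) : seq T :=
  take i s ++ drop i.+1 s.

Definition stabilizer_gens (n k : nat) (g : seq 'M[algC]_(2 ^ n)) : Prop :=
  size g = (n - k)%N /\
  (forall i, (i < size g)%N -> pauli n g`_i) /\
  (forall i j, (i < size g)%N -> (j < size g)%N -> g`_i *m g`_j = g`_j *m g`_i) /\
  ~ gen_group g (- 1%:M) /\
  (forall i, (i < size g)%N -> ~ gen_group (rem_nth i g) g`_i).

Definition codespace {n : nat} (g : seq 'M[algC]_(2 ^ n)) (v : 'cV[algC]_(2 ^ n)) : Prop :=
  forall M, gen_group g M -> M *m v = v.

Definition valid_stabilizer_encoder (n k : nat) (E : 'M[algC]_(2 ^ n, 2 ^ k)) : Prop :=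
  (exists c : algC, c != 0 /\ adjmx (c *: E) *m (c *: E) = 1%:M) /\
  exists g, stabilizer_gens n k g /\
    forall v : 'cV[algC]_(2 ^ n), (exists x : 'cV[algC]_(2 ^ k), v = E *m x) <-> codespace g v.

From mathcomp Require Import all_boot all_order all_algebra.
From mathcomp Require Import algC ring.
Import GRing.Theory Num.Theory.
Local Open Scope ring_scope.
Set Implicit Arguments.
Unset Strict Implicit.

(* The encoder factors as E_{G,Gamma} = D_G H^{(x)n} B_Gamma, where D_G is the
   diagonal product of the CZ gates, H the Hadamard gate and B_Gamma the 0/1
   matrix sending |x> to |x Gamma>.  As W := L_c D_G H^{(x)n} and C are unitary,
   E is a scaled isometry iff the Gram matrix of B_Gamma, whose (x, y) entry is
   [x Gamma = y Gamma], is scalar, i.e. iff x |-> x Gamma is injective, i.e. iff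
   rank Gamma = k.  In that case the image of B_Gamma is spanned by the |r> with
   r in the row space of Gamma, which is the common +1 eigenspace of the Z^c for
   c ranging over a basis of ker Gamma^T (n - k vectors).  Conjugating by W maps
   these Z^c to independent commuting Pauli operators: H turns Z^a into X^a,
   D_G turns X^a into +-Z^(aG) X^a, and single-qubit Cliffords preserve Paulis. *)

Lemma eq_nat_bits n a b : (a < 2 ^ n)%N -> (b < 2 ^ n)%N ->
  (forall j, (j < n)%N -> odd (a %/ 2 ^ j) = odd (b %/ 2 ^ j)) -> a = b.
Proof.
elim: n a b => [|n IH] a b; first by rewrite !ltnS !leqn0 => /eqP-> /eqP->.
move=> ha hb hab; have := hab 0%N isT; rewrite !divn1 => odd_ab.
suff half_ab : a./2 = b./2 by rewrite -[a]odd_double_half -[b]odd_double_half odd_ab half_ab.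
rewrite -!divn2; apply: IH; try by rewrite ltn_divLR // -expnSr.
by move=> j hj; rewrite -!divnMA -expnS; apply: hab.
Qed.

Lemma bit_inj n (a b : 'I_(2 ^ n)) : (forall j, bit a j = bit b j) -> a = b.
Proof.
move=> hab; apply/val_inj/(@eq_nat_bits n) => [||j hj]; rewrite ?ltn_ord //.
exact: hab (Ordinal hj).
Qed.

Lemma bitordE n (a : 'I_(2 ^ n)) j : val (bitord a j) = bit a j.
Proof. by rewrite /bitord /= inordK //; case: (bit a j). Qed.

Lemma bitord_inj n (a b : 'I_(2 ^ n)) : (forall j, bitord a j = bitord b j) -> a = b.
Proof.
move=> hab; apply: bit_inj => j; have := congr1 val (hab j); rewrite !bitordE.
by case: (bit a j); case: (bit b j).
Qed.

Definition bits_ffun {n} (a : 'I_(2 ^ n)) : {ffun 'I_n -> 'I_2} := [ffun j => bitord a j].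

Lemma bits_ffun_bij n : bijective (@bits_ffun n).
Proof.
apply: inj_card_bij; last by rewrite card_ffun !card_ord.
by move=> a b /ffunP hab; apply: bitord_inj => j; have := hab j; rewrite !ffunE.
Qed.

Lemma reindex_bits (V : nmodType) n (F : {ffun 'I_n -> 'I_2} -> V) :
  \sum_(a : 'I_(2 ^ n)) F (bits_ffun a) = \sum_f F f.
Proof. by rewrite (reindex (@bits_ffun n)) //; apply/onW_bij/bits_ffun_bij. Qed.

Lemma F2_cases (x : 'F_2) : x = 0 \/ x = 1.
Proof. by case: x => [[|[|m]] hm]; [left|right|]; try apply: val_inj. Qed.

Lemma bits_rvE n (a : 'I_(2 ^ n)) j : bits_rv a 0 j = (val (bitord a j))%:R.
Proof. by rewrite mxE bitordE. Qed.

Lemma bits_rv_inj n : injective (@bits_rv n).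
Proof.
move=> a b /matrixP hab; apply: bit_inj => j.
by have := hab 0 j; rewrite !mxE; case: (bit a j); case: (bit b j).
Qed.

Lemma bits_rv_bij n : bijective (@bits_rv n).
Proof.
apply: inj_card_bij; first exact: bits_rv_inj.
by rewrite card_mx card_Fp // card_ord mul1n.
Qed.

Lemma exp2_gt0 n : (0 < 2 ^ n)%N.
Proof. by rewrite expn_gt0. Qed.

Definition rv_index {n} (r : 'rV['F_2]_n) : 'I_(2 ^ n) :=
  odflt (Ordinal (exp2_gt0 n)) [pick a | bits_rv a == r].

Lemma rv_indexK n (r : 'rV['F_2]_n) : bits_rv (rv_index r) = r.
Proof.
rewrite /rv_index; case: pickP => [a /eqP //|no_a].
by have [g _ gK] := bits_rv_bij n; have := no_a (g r); rewrite gK eqxx.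
Qed.

Lemma bits_rvK n : cancel (@bits_rv n) (@rv_index n).
Proof. by move=> a; apply: bits_rv_inj; rewrite rv_indexK. Qed.

Lemma rv_index_inj n : injective (@rv_index n).
Proof. exact: can_inj (@rv_indexK n). Qed.

Lemma tens_mul n (U V : 'I_n -> 'M[algC]_2) :
  tens U *m tens V = tens (fun j => U j *m V j).
Proof.
apply/matrixP => a c; rewrite !mxE.
under [RHS]eq_bigr do rewrite mxE.
rewrite bigA_distr_bigA /= -(@reindex_bits _ n (fun f =>
   \prod_j (U j (bitord a j) (f j) * V j (f j) (bitord c j)))).
apply: eq_bigr => b _; rewrite !mxE -big_split /=.
by apply: eq_bigr => j _; rewrite !ffunE.
Qed.

Lemma prod_nat_bool (R : pzSemiRingType) I (r : seq I) (P : I -> bool) :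
  \prod_(i <- r) (P i)%:R = (all P r)%:R :> R.
Proof.
elim: r => [|x r IH]; first by rewrite big_nil.
by rewrite big_cons IH /=; case: (P x); rewrite ?mul1r ?mul0r.
Qed.

Lemma tens_diag n (U : 'I_n -> 'M[algC]_2) (f : 'I_n -> 'I_2 -> algC) :
  (forall j, U j = \matrix_(i1, i2) ((i1 == i2)%:R * f j i1)) ->
  tens U = \matrix_(a, b) ((a == b)%:R * \prod_j f j (bitord a j)).
Proof.
move=> hU; apply/matrixP => a b; rewrite !mxE.
transitivity (\prod_j ((bitord a j == bitord b j)%:R * f j (bitord a j))).
  by apply: eq_bigr => j _; rewrite hU mxE.
rewrite big_split /= prod_nat_bool; congr (_ * _); congr (nat_of_bool _)%:R.
apply/allP/eqP => [hab|->] ; last by move=> j _; rewrite eqxx.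
by apply: bitord_inj => j; apply/eqP/hab; rewrite mem_index_enum.
Qed.

Lemma eq_tens n (U V : 'I_n -> 'M[algC]_2) : U =1 V -> tens U = tens V.
Proof. by move=> eUV; apply/matrixP => a b; rewrite !mxE; apply: eq_bigr => j _; rewrite eUV. Qed.

Lemma tensZ n (c : 'I_n -> algC) (U : 'I_n -> 'M[algC]_2) :
  tens (fun j => c j *: U j) = (\prod_j c j) *: tens U.
Proof.
apply/matrixP => a b; rewrite !mxE -big_split /=.
by apply: eq_bigr => j _; rewrite mxE.
Qed.

Lemma tens1 n : tens (fun _ : 'I_n => 1%:M : 'M[algC]_2) = 1%:M.
Proof.
rewrite (@tens_diag n _ (fun _ _ => 1)) => [|j]; last by apply/matrixP => i1 i2; rewrite !mxE mulr1.
by apply/matrixP => a b; rewrite !mxE big1 ?mulr1.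
Qed.

Lemma tens_one (U : 'I_1 -> 'M[algC]_2) : tens U = U ord0 :> 'M[algC]_(2 ^ 1).
Proof.
have bitord0 (a : 'I_(2 ^ 1)) : bitord a ord0 = a.
  by apply: val_inj; rewrite bitordE /bit divn1; case: a => [[|[|?]] ?].
by apply/matrixP => a b; rewrite mxE big_ord1 !bitord0.
Qed.

Lemma adjmxM m p q (A : 'M[algC]_(m, p)) (B : 'M[algC]_(p, q)) :
  adjmx (A *m B) = adjmx B *m adjmx A.
Proof. by rewrite /adjmx map_mxM trmx_mul. Qed.

Lemma adjmxZ m p (c : algC) (A : 'M[algC]_(m, p)) : adjmx (c *: A) = c^* *: adjmx A.
Proof. by apply/matrixP => i j; rewrite !mxE rmorphM. Qed.

Lemma adjmx_tens n (U : 'I_n -> 'M[algC]_2) :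
  adjmx (tens U) = tens (fun j => adjmx (U j)).
Proof. by apply/matrixP => a b; rewrite !mxE rmorph_prod; apply: eq_bigr => j _; rewrite !mxE. Qed.

Lemma adjmx_diag m (d : 'rV[algC]_m) : adjmx (diag_mx d) = diag_mx (map_mx Num.conj d).
Proof.
apply/matrixP => i j; rewrite !mxE rmorphMn eq_sym.
by case: eqP => [->|_] //; rewrite !mulr0n.
Qed.

Lemma unitary_tens n (U : 'I_n -> 'M[algC]_2) :
  (forall j, unitary (U j)) -> unitary (tens U).
Proof. by move=> hU; rewrite /unitary adjmx_tens tens_mul -(tens1 n); apply: eq_tens. Qed.

Lemma unitaryM m (A B : 'M[algC]_m) : unitary A -> unitary B -> unitary (A *m B).
Proof.
rewrite /unitary adjmxM => hA hB.
by rewrite mulmxA -(mulmxA (adjmx B)) hA mulmx1 hB.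
Qed.

Lemma unitary_mul_adj m (A : 'M[algC]_m) : unitary A -> A *m adjmx A = 1%:M.
Proof. exact: mulmx1C. Qed.

Lemma sum_mul_delta (R : pzSemiRingType) (I : finType) (F : I -> R) i :
  \sum_t F t * (t == i)%:R = F i.
Proof. by rewrite (bigD1 i) //= eqxx mulr1 big1 ?addr0 // => t /negPf ->; rewrite mulr0. Qed.

Definition signF2 (e : 'F_2) : algC := if e == 0 then 1 else -1.

Lemma signF2D x y : signF2 (x + y) = signF2 x * signF2 y.
Proof.
by case: (F2_cases x) => ->; case: (F2_cases y) => ->; rewrite /signF2 /= ?mulrNN ?mulr1 ?mul1r.
Qed.

Lemma signF2_sum I (r : seq I) (P : pred I) (F : I -> 'F_2) :
  \prod_(i <- r | P i) signF2 (F i) = signF2 (\sum_(i <- r | P i) F i).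
Proof. by rewrite (big_morph signF2 signF2D (erefl (signF2 0))). Qed.

Lemma conj_signF2 e : (signF2 e)^* = signF2 e.
Proof. by rewrite /signF2; case: (e == 0); rewrite ?rmorphN rmorph1. Qed.

Lemma signF2_sqr e : signF2 e * signF2 e = 1.
Proof. by rewrite /signF2; case: (e == 0); rewrite ?mulrNN mulr1. Qed.

Lemma signF2_expi e : signF2 e = 'i ^+ (if e == 0 then 0 else 2).
Proof. by rewrite /signF2; case: (e == 0); rewrite ?expr0 ?sqrCi. Qed.

Lemma signF2_eq1 e : (signF2 e == 1) = (e == 0).
Proof.
case: (F2_cases e) => ->; rewrite /signF2 /= ?eqxx //.
by rewrite -subr_eq0 -opprD oppr_eq0 -mulr2n mulrn_eq0 oner_eq0.
Qed.

Lemma signF2_inj : injective signF2.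
Proof.
move=> x y; case: (F2_cases x) => ->; case: (F2_cases y) => -> // /eqP;
  by rewrite ?signF2_eq1 // eq_sym signF2_eq1.
Qed.

Definition dotF2 {n} (c r : 'rV['F_2]_n) : 'F_2 := (c *m r^T) 0 0.

Lemma dotF2E n (c r : 'rV['F_2]_n) : dotF2 c r = \sum_j c 0 j * r 0 j.
Proof. by rewrite /dotF2 mxE; apply: eq_bigr => j _; rewrite mxE. Qed.

Lemma dotF2C n (c r : 'rV['F_2]_n) : dotF2 c r = dotF2 r c.
Proof. by rewrite !dotF2E; apply: eq_bigr => j _; rewrite mulrC. Qed.

Lemma dotF2_delta n (c : 'rV['F_2]_n) j : dotF2 c (delta_mx 0 j) = c 0 j.
Proof.
by rewrite dotF2E -[RHS](@sum_mul_delta _ _ (c 0)); apply: eq_bigr => t _; rewrite mxE eqxx.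
Qed.

Definition Zq (e : 'F_2) : 'M[algC]_2 := if e == 1 then Zm else 1%:M.
Definition Xq (e : 'F_2) : 'M[algC]_2 := if e == 1 then Xm else 1%:M.
Definition Xpow {n} (a : 'rV['F_2]_n) : 'M[algC]_(2 ^ n) := tens (fun j => Xq (a 0 j)).

Lemma ZqE e : Zq e = \matrix_(i1, i2) ((i1 == i2)%:R * signF2 (e * (val i1)%:R)).
Proof.
apply/matrixP => i1 i2; rewrite /Zq.
case: (F2_cases e) => ->; rewrite !mxE;
by case: i1 => [[|[|?]] ?] //; case: i2 => [[|[|?]] ?] //=; rewrite ?mulr1 ?mulr0.
Qed.

Lemma XqE e (i1 i2 : 'I_2) : Xq e i1 i2 = ((val i2)%:R == (val i1)%:R + e :> 'F_2)%:R.
Proof.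
rewrite /Xq; case: (F2_cases e) => ->; rewrite /= !mxE;
by case: i1 => [[|[|?]] ?] //; case: i2 => [[|[|?]] ?].
Qed.

Lemma Zpow_diag n (c : 'rV['F_2]_n) :
  Zpow c = diag_mx (\row_a signF2 (dotF2 c (bits_rv a))).
Proof.
rewrite /Zpow (@tens_diag n _ (fun j i => signF2 (c 0 j * (val i)%:R))) => [|j]; last exact: ZqE.
apply/matrixP => a b; rewrite !mxE signF2_sum mulr_natl dotF2E.
by congr (signF2 _ *+ _); apply: eq_bigr => j _; rewrite bits_rvE.
Qed.

Lemma Xpow_entry n (a : 'rV['F_2]_n) s t :
  Xpow a s t = (bits_rv t == bits_rv s + a)%:R.
Proof.
rewrite mxE; under eq_bigr do rewrite XqE.
rewrite prod_nat_bool; congr (nat_of_bool _)%:R.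
apply/allP/eqP => [hst|/rowP hst j _].
  by apply/rowP => j; have /eqP := hst j (mem_index_enum _); rewrite !mxE !bitordE.
by have := hst j; rewrite !mxE !bitordE => ->.
Qed.

Lemma ZpowD n (a b : 'rV['F_2]_n) : Zpow a *m Zpow b = Zpow (a + b).
Proof.
rewrite !Zpow_diag mulmx_diag; congr diag_mx; apply/rowP => i.
by rewrite !mxE /dotF2 mulmxDl [in RHS]mxE signF2D.
Qed.

Lemma Zpow0 n : Zpow (0 : 'rV['F_2]_n) = 1%:M.
Proof.
rewrite Zpow_diag -diag_const_mx; congr diag_mx; apply/rowP => i.
by rewrite !mxE /dotF2 mul0mx mxE.
Qed.

Lemma Zpow_entry n (c r : 'rV['F_2]_n) : Zpow c (rv_index r) (rv_index r) = signF2 (dotF2 c r).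
Proof. by rewrite Zpow_diag mxE eqxx mulr1n mxE rv_indexK. Qed.

Lemma Zpow_inj n : injective (@Zpow n).
Proof.
move=> a b /matrixP eab; apply/rowP => j.
have := eab (rv_index (delta_mx 0 j)) (rv_index (delta_mx 0 j)).
by rewrite !Zpow_entry !dotF2_delta => /signF2_inj.
Qed.

Lemma Zpow_neqN1 n (c : 'rV['F_2]_n) : Zpow c != - 1%:M.
Proof.
apply/negP => /eqP/matrixP/(_ (rv_index 0) (rv_index 0)).
rewrite Zpow_entry dotF2C /dotF2 mul0mx !mxE eqxx /= => /eqP.
by rewrite -subr_eq0 opprK -mulr2n mulrn_eq0 oner_eq0.
Qed.

Definition Hm : 'M[algC]_2 := \matrix_(i, j) ((sqrtC 2)^-1 * (-1) ^+ (i * j)).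
Definition Hpow n : 'M[algC]_(2 ^ n) := tens (fun _ : 'I_n => Hm).

Lemma big_ord2 (V : nmodType) (F : 'I_2 -> V) : \sum_i F i = F ord0 + F (Ordinal (isT : (1 < 2)%N)).
Proof. by rewrite big_ord_recl big_ord1; congr (_ + F _); apply: val_inj. Qed.

Lemma adjmx_Hm : adjmx Hm = Hm.
Proof.
have conj_isqrt2 : ((sqrtC 2)^-1)^* = (sqrtC 2)^-1 :> algC.
  by apply: geC0_conj; rewrite invr_ge0 sqrtC_ge0 ler0n.
by apply/matrixP => i j; rewrite !mxE rmorphM /= conj_isqrt2 rmorphXn rmorphN rmorph1 mulnC.
Qed.

Lemma Hm_conj_Zq e : Hm *m Zq e *m adjmx Hm = Xq e.
Proof.
have isqrt2_sqr : (sqrtC 2)^-1 * (sqrtC 2)^-1 = 2^-1 :> algC by rewrite -invfM -expr2 sqrtCK.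
have half_half : 2^-1 + 2^-1 = 1 :> algC by field.
rewrite adjmx_Hm /Zq /Xq; case: (F2_cases e) => -> /=;
apply/matrixP => i j; rewrite !mxE !big_ord2 !mxE ?big_ord2 ?mxE;
by case: i => [[|[|?]] ?] //; case: j => [[|[|?]] ?] //=; rewrite ?expr0 ?expr1
  ?(mulr1, mulrN1, oppr0, mulr0, addr0, add0r, sub0r, subr0, mulrN, mulNr, opprK,
     isqrt2_sqr, subrr, half_half).
Qed.

Lemma Hpow_conj_Zpow n (a : 'rV['F_2]_n) : Hpow n *m Zpow a *m adjmx (Hpow n) = Xpow a.
Proof. by rewrite adjmx_tens !tens_mul; apply: eq_tens => j; apply: Hm_conj_Zq. Qed.

Lemma unitary_Hpow n : unitary (Hpow n).
Proof.
apply: unitary_tens => _; apply: mulmx1C.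
by have := Hm_conj_Zq 0; rewrite /Zq /Xq /= mulmx1.
Qed.

Lemma pauli1P (M : 'M[algC]_2) :
  pauli 1 M <-> exists m P, pauli1 P /\ M = 'i ^+ m *: P.
Proof.
split=> [[m [Ps [hPs ->]]]|[m [P [hP ->]]]]; first by exists m, (Ps ord0); rewrite tens_one.
by exists m, (fun _ => P); rewrite tens_one.
Qed.

Lemma pauliZ n (P : 'M[algC]_(2 ^ n)) m : pauli n P -> pauli n ('i ^+ m *: P).
Proof. by case=> c [Ps [hPs ->]]; exists (m + c)%N, Ps; rewrite scalerA exprD. Qed.

Lemma pauli_tens n (U : 'I_n -> 'M[algC]_2) : (forall j, pauli 1 (U j)) -> pauli n (tens U).
Proof.
move=> hU; have /fin_all_exists[m /fin_all_exists[P hP]] :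
  forall j, exists m P, pauli1 P /\ U j = 'i ^+ m *: P by move=> j; apply/pauli1P.
exists (\sum_j m j)%N, P; split=> [j|]; first by case: (hP j).
by rewrite (eq_tens (fun j => proj2 (hP j))) tensZ prodrXr.
Qed.

Lemma pauli_ZqXq c a : pauli 1 (Zq c *m Xq a).
Proof.
apply/pauli1P; rewrite /Zq /Xq; case: (F2_cases c) => ->; case: (F2_cases a) => -> /=.
- by exists 0%N, 1%:M; rewrite mulmx1 scale1r; split=> //; left.
- by exists 0%N, Xm; rewrite mul1mx scale1r; split=> //; right; left.
- by exists 0%N, Zm; rewrite mulmx1 scale1r; split=> //; right; right; right.
exists 1%N, Ym; split; first by right; right; left.
rewrite /Ym scalerA -expr2 sqrCi; apply/matrixP => i j; rewrite !mxE !big_ord2 !mxE.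
by case: i => [[|[|?]] ?] //; case: j => [[|[|?]] ?] //=;
  rewrite ?(mulr0n, mulr1n, mulr0, mul0r, mulr1, mul1r, addr0, add0r, expr0, expr1, mulrN1,
            mulN1r, opprK, oppr0).
Qed.

Definition graph_cz n (G : 'M['F_2]_n) : 'M[algC]_(2 ^ n) :=
  \prod_(u < n) \prod_(v < n | (u < v)%N && (G u v == 1)) CZ u v.

Definition graph_qf n (G : 'M['F_2]_n) (x : 'rV['F_2]_n) : 'F_2 :=
  \sum_(u < n) \sum_(v < n | (u < v)%N) G u v * x 0 u * x 0 v.

Lemma prod_diag_mx (R : comPzRingType) m I (r : seq I) (P : pred I) (d : I -> 'rV[R]_m) :
  \prod_(i <- r | P i) diag_mx (d i) = diag_mx (\row_a \prod_(i <- r | P i) d i 0 a).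
Proof.
elim: r => [|i r IH].
  rewrite big_nil; change (1%:M = diag_mx (\row_a \prod_(i <- [::] | P i) d i 0 a)).
  by rewrite -diag_const_mx; congr diag_mx; apply/rowP => a; rewrite !mxE big_nil.
rewrite big_cons IH; case: ifP => Pi; last first.
  by congr diag_mx; apply/rowP => a; rewrite !mxE big_cons Pi.
by rewrite -mulmxE mulmx_diag; congr diag_mx; apply/rowP => a; rewrite !mxE big_cons Pi.
Qed.

Lemma graph_cz_diag n (G : 'M['F_2]_n) :
  graph_cz G = diag_mx (\row_s signF2 (graph_qf G (bits_rv s))).
Proof.
have CZ_diag (u v : 'I_n) : CZ u v = diag_mx (\row_a (if bit a u && bit a v then -1 else 1)).
  by apply/matrixP => a b; rewrite !mxE mulr_natl.
rewrite /graph_cz; under eq_bigr do under eq_bigr do rewrite CZ_diag.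
under eq_bigr do rewrite prod_diag_mx.
rewrite prod_diag_mx; congr diag_mx; apply/rowP => s.
rewrite !mxE -signF2_sum; apply: eq_bigr => u _.
rewrite mxE -signF2_sum big_mkcondr /=; apply: eq_bigr => v _.
rewrite mxE !bits_rvE !bitordE.
by case: (F2_cases (G u v)) => -> /=; [rewrite !mul0r | case: (bit s u); case: (bit s v)].
Qed.

Lemma adjmx_graph_cz n (G : 'M['F_2]_n) : adjmx (graph_cz G) = graph_cz G.
Proof.
by rewrite graph_cz_diag adjmx_diag; congr diag_mx; apply/rowP => s; rewrite !mxE conj_signF2.
Qed.

Lemma unitary_graph_cz n (G : 'M['F_2]_n) : unitary (graph_cz G).
Proof.
rewrite /unitary adjmx_graph_cz graph_cz_diag mulmx_diag -diag_const_mx.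
by congr diag_mx; apply/rowP => s; rewrite !mxE signF2_sqr.
Qed.

Section SimpleGraph.
Variables (n : nat) (G : 'M['F_2]_n).
Hypothesis hG : simple_graph G.

Lemma simple_graph_sym u v : G v u = G u v.
Proof. by case: hG => hT _; rewrite -{1}hT mxE. Qed.

Lemma dotF2_graph_sym (x a : 'rV['F_2]_n) : dotF2 (x *m G) a = dotF2 (a *m G) x.
Proof.
by case: hG => hT _; rewrite [RHS]dotF2C /dotF2 trmx_mul hT mulmxA.
Qed.

(* Symmetry and the zero diagonal turn the half-sum over u < v into the full bilinear form. *)
Lemma graph_qf_cross (x a : 'rV['F_2]_n) :
  \sum_(u < n) \sum_(v < n | (u < v)%N) (G u v * x 0 u * a 0 v + G u v * a 0 u * x 0 v)
  = dotF2 (x *m G) a.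
Proof.
case: hG => _ hdiag.
under eq_bigr do rewrite big_split /=.
rewrite big_split /=.
under eq_bigr do rewrite big_mkcond /=.
under [X in _ + X]eq_bigr do rewrite big_mkcond /=.
rewrite [X in _ + X]exchange_big /= -big_split /= dotF2E.
under [RHS]eq_bigr do rewrite mxE big_distrl /=.
rewrite [RHS]exchange_big /=; apply: eq_bigr => u _; rewrite -big_split /=.
apply: eq_bigr => v _; case: (ltngtP u v) => [_|_|/val_inj->].
- by rewrite addr0; ring.
- by rewrite add0r simple_graph_sym; ring.
- by rewrite hdiag; ring.
Qed.

Lemma graph_qfD (x a : 'rV['F_2]_n) :
  graph_qf G (x + a) = graph_qf G x + graph_qf G a + dotF2 (x *m G) a.
Proof.
rewrite -graph_qf_cross /graph_qf -!big_split /=; apply: eq_bigr => u _.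
by rewrite -!big_split /=; apply: eq_bigr => v _; rewrite !mxE; ring.
Qed.

Lemma graph_cz_conj_Xpow (a : 'rV['F_2]_n) :
  graph_cz G *m Xpow a *m adjmx (graph_cz G) =
  signF2 (graph_qf G a) *: (Zpow (a *m G) *m Xpow a).
Proof.
have -> : Xpow a = \matrix_(s, t) (bits_rv t == bits_rv s + a)%:R.
  by apply/matrixP => s t; rewrite Xpow_entry mxE.
rewrite adjmx_graph_cz Zpow_diag graph_cz_diag mul_diag_mx mul_mx_diag mul_diag_mx.
apply/matrixP => s t; rewrite !mxE; case: eqP => [->|_]; last by rewrite !(mulr0, mul0r).
by rewrite graph_qfD !signF2D dotF2_graph_sym mulr1 !mulrA signF2_sqr mul1r /= mulr1.
Qed.

End SimpleGraph.

Definition enc_frame n (G : 'M['F_2]_n) (L : 'I_n -> 'M[algC]_2) : 'M[algC]_(2 ^ n) :=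
  tens L *m graph_cz G *m Hpow n.

Definition conj_Zpow n (W : 'M[algC]_(2 ^ n)) (c : 'rV['F_2]_n) : 'M[algC]_(2 ^ n) :=
  W *m Zpow c *m adjmx W.

Lemma unitary_enc_frame n (G : 'M['F_2]_n) L :
  (forall j, unitary (L j)) -> unitary (enc_frame G L).
Proof.
move=> hL; apply: unitaryM; last exact: unitary_Hpow.
by apply: unitaryM; [apply: unitary_tens | apply: unitary_graph_cz].
Qed.

Lemma pauli_conj_Zpow_enc_frame n (G : 'M['F_2]_n) L a :
  simple_graph G -> (forall j, clifford 1 (L j)) -> pauli n (conj_Zpow (enc_frame G L) a).
Proof.
move=> hG hL; set D := graph_cz G; rewrite /conj_Zpow /enc_frame !adjmxM.
have -> : tens L *m D *m Hpow n *m Zpow a *m (adjmx (Hpow n) *m (adjmx D *m adjmx (tens L)))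
    = tens L *m (D *m (Hpow n *m Zpow a *m adjmx (Hpow n)) *m adjmx D) *m adjmx (tens L).
  by rewrite !mulmxA.
rewrite Hpow_conj_Zpow graph_cz_conj_Xpow // signF2_expi -scalemxAr -scalemxAl.
apply: pauliZ; rewrite tens_mul adjmx_tens !tens_mul; apply: pauli_tens => j.
have [_ hLj] := hL j; exact: (hLj _ (pauli_ZqXq _ _)).1.
Qed.

Lemma conj_ZpowD n (W : 'M[algC]_(2 ^ n)) a b :
  unitary W -> conj_Zpow W a *m conj_Zpow W b = conj_Zpow W (a + b).
Proof.
move=> hW; rewrite /conj_Zpow !mulmxA -(mulmxA _ (adjmx W) W) hW mulmx1.
by rewrite -(mulmxA W (Zpow a)) ZpowD.
Qed.

Lemma conj_ZpowK n (W : 'M[algC]_(2 ^ n)) a : unitary W -> adjmx W *m conj_Zpow W a *m W = Zpow a.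
Proof. by move=> hW; rewrite /conj_Zpow !mulmxA hW mul1mx -mulmxA hW mulmx1. Qed.

Lemma conj_Zpow_inj n (W : 'M[algC]_(2 ^ n)) : unitary W -> injective (conj_Zpow W).
Proof. by move=> hW a b eab; apply: Zpow_inj; rewrite -(conj_ZpowK a hW) eab conj_ZpowK. Qed.

Lemma conj_Zpow_neqN1 n (W : 'M[algC]_(2 ^ n)) a : unitary W -> conj_Zpow W a != - 1%:M.
Proof.
move=> hW; apply: contraNneq (Zpow_neqN1 a) => eN1.
by rewrite -(conj_ZpowK a hW) eN1 mulmxN mulmx1 mulNmx hW.
Qed.

Lemma conj_Zpow_fixP n (W : 'M[algC]_(2 ^ n)) a (v : 'cV[algC]_(2 ^ n)) : unitary W ->
  conj_Zpow W a *m v = v <-> Zpow a *m (adjmx W *m v) = adjmx W *m v.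
Proof.
move=> hW; split=> [fix_v|fix_u].
  by rewrite -[in RHS]fix_v /conj_Zpow !mulmxA hW mul1mx.
by rewrite /conj_Zpow -!mulmxA fix_u mulmxA unitary_mul_adj // mul1mx.
Qed.

Definition basis_map n k (Gam : 'M['F_2]_(k, n)) : 'M[algC]_(2 ^ n, 2 ^ k) :=
  \matrix_(s, x) (s == rv_index (bits_rv x *m Gam))%:R.

Lemma enc_decomp n k (G : 'M['F_2]_n) (Gam : 'M['F_2]_(k, n)) :
  enc G Gam = graph_cz G *m Hpow n *m basis_map Gam.
Proof.
have sign_mul (i1 i2 : 'I_2) : (-1) ^+ (i1 * i2) = signF2 ((val i2)%:R * (val i1)%:R) :> algC.
  by case: i1 => [[|[|?]] ?] //; case: i2 => [[|[|?]] ?] //=; rewrite ?expr0 ?expr1.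
apply/matrixP => s x; rewrite /enc mxE /graph_state -/(graph_cz G).
rewrite Zpow_diag graph_cz_diag !mul_diag_mx !mxE.
under eq_bigr do rewrite !mxE.
rewrite sum_mul_delta; under eq_bigr do rewrite mxE.
rewrite big_split /= prodr_const card_ord exprVn.
suff -> : signF2 (dotF2 (bits_rv x *m Gam) (bits_rv s)) =
    \prod_j (-1) ^+ (bitord s j * bitord (rv_index (bits_rv x *m Gam)) j) by ring.
rewrite dotF2E -signF2_sum; apply: eq_bigr => j _.
by rewrite sign_mul bits_rvE -[(val (bitord (rv_index _) j))%:R]bits_rvE rv_indexK.
Qed.

Lemma basis_map_gram n k (Gam : 'M['F_2]_(k, n)) :
  adjmx (basis_map Gam) *m basis_map Gam =
  \matrix_(x, y) (bits_rv x *m Gam == bits_rv y *m Gam)%:R.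
Proof.
apply/matrixP => x y; rewrite !mxE.
under eq_bigr do rewrite !mxE conjC_nat.
by rewrite sum_mul_delta; congr (nat_of_bool _)%:R; apply/eqP/eqP => [/rv_index_inj|->].
Qed.

Definition rows_seq (F : fieldType) m n (K : 'M[F]_(m, n)) : seq 'rV[F]_n :=
  [seq row j K | j <- enum 'I_m].

Lemma size_rows_seq (F : fieldType) m n (K : 'M[F]_(m, n)) : size (rows_seq K) = m.
Proof. by rewrite size_map size_enum_ord. Qed.

Lemma nth_rows_seq (F : fieldType) m n (K : 'M[F]_(m, n)) (j : 'I_m) : (rows_seq K)`_j = row j K.
Proof. by rewrite (nth_map j) ?size_enum_ord // nth_ord_enum. Qed.

Lemma rem_nth_map (T U : Type) (f : T -> U) i s : rem_nth i (map f s) = map f (rem_nth i s).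
Proof. by rewrite /rem_nth map_cat map_take map_drop. Qed.

Lemma nth_notin_rem_nth (T : eqType) (x0 : T) s i :
  uniq s -> (i < size s)%N -> nth x0 s i \notin rem_nth i s.
Proof.
move=> + lt_i_s; rewrite -{1}(cat_take_drop i s) (drop_nth x0 lt_i_s) -cat1s uniq_catCA.
by rewrite cat1s cons_uniq => /andP[].
Qed.

Lemma rem_nth_rows_sub (F : fieldType) m n (K : 'M[F]_(m, n)) (i : 'I_m) x :
  x \in rem_nth i (rows_seq K) -> (x <= row' i K)%MS.
Proof.
rewrite rem_nth_map => /mapP[j j_rem ->].
have : j != i.
  apply: contraTneq j_rem => ->; rewrite -[X in X \in _](nth_ord_enum i i).
  by apply: nth_notin_rem_nth; rewrite ?enum_uniq ?size_enum_ord.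
rewrite eq_sym => /unlift_some[j' -> _].
suff -> : row (lift i j') K = row j' (row' i K) by apply: row_sub.
by apply/rowP => l; rewrite !mxE.
Qed.

Lemma codespaceP n (g : seq 'M[algC]_(2 ^ n)) v :
  codespace g v <-> forall i, (i < size g)%N -> g`_i *m v = v.
Proof.
split=> [gv i lt_i_g|gv M [s [+ ->]]].
  by apply: gv; exists [:: i]; rewrite /= lt_i_g big_seq1.
elim: s => [_|t s IH] /=; first by rewrite big_nil mul1mx.
by case/andP=> lt_t_g /IH sv; rewrite big_cons -mulmxE -mulmxA sv gv.
Qed.

Lemma gen_group_conj_Zpow n (W : 'M[algC]_(2 ^ n)) (cs : seq 'rV['F_2]_n) p
    (B : 'M['F_2]_(p, n)) M :
  unitary W -> {in cs, forall c, (c <= B)%MS} -> gen_group (map (conj_Zpow W) cs) M ->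
  exists2 c, (c <= B)%MS & M = conj_Zpow W c.
Proof.
move=> hW csB [s [+ ->]]; rewrite size_map; elim: s => [_|t s IH] /=.
  by exists 0; rewrite ?sub0mx // big_nil /conj_Zpow Zpow0 mulmx1 unitary_mul_adj.
rewrite big_cons; case/andP=> lt_t_cs /IH[c cB ->].
exists (cs`_t + c); first by rewrite addmx_sub // csB ?mem_nth.
by rewrite (nth_map 0) // -mulmxE conj_ZpowD.
Qed.

Lemma stabilizer_gens_conj_Zpow n k m (W : 'M[algC]_(2 ^ n)) (K : 'M['F_2]_(m, n)) :
  m = (n - k)%N -> unitary W -> (forall c, pauli n (conj_Zpow W c)) -> row_free K ->
  stabilizer_gens n k (map (conj_Zpow W) (rows_seq K)).
Proof.
move=> def_m hW pauliW freeK; rewrite /stabilizer_gens size_map size_rows_seq.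
split=> //; split=> [i lt_i_m|]; first by rewrite (nth_map 0) ?size_rows_seq.
split=> [i j lt_i_m lt_j_m|]; first by rewrite !(nth_map 0) ?size_rows_seq // !conj_ZpowD // addrC.
split=> [/(gen_group_conj_Zpow (B := 1%:M) hW (fun c _ => submx1 c))[c _ /esym/eqP]|].
  by apply/negP/conj_Zpow_neqN1.
move=> i lt_i_m; pose i' := Ordinal lt_i_m.
rewrite rem_nth_map (nth_map 0) ?size_rows_seq // (nth_rows_seq K i').
case/(gen_group_conj_Zpow hW (@rem_nth_rows_sub _ _ _ K i'))=> c c_sub /conj_Zpow_inj eq_c.
by move: freeK; apply/negP/row_freePn; exists i'; rewrite eq_c.
Qed.

Lemma sub_row_space_orth (F : fieldType) m n p (A : 'M[F]_(m, n)) (K : 'M[F]_(p, n))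
    (r : 'rV[F]_n) :
  (K :=: kermx A^T)%MS -> (r <= A)%MS = (r *m K^T == 0).
Proof.
move=> eqK; have KA : K *m A^T = 0 by apply/sub_kermxP; rewrite eqK.
apply/idP/eqP => [/submxP[x ->]|rK]; first by rewrite -mulmxA -(trmxK A) -trmx_mul KA trmx0 mulmx0.
have AK : (A <= kermx K^T)%MS by apply/sub_kermxP; rewrite -(trmxK A) -trmx_mul KA trmx0.
have rankK : \rank (kermx K^T) = \rank A.
  by rewrite mxrank_ker mxrank_tr eqK mxrank_ker mxrank_tr subKn ?rank_leq_col.
have KA' : (kermx K^T <= A)%MS by rewrite -(mxrank_leqif_sup AK).2 rankK.
by apply: submx_trans KA'; apply/sub_kermxP.
Qed.

Lemma mul_trmx_eq0P m n (K : 'M['F_2]_(m, n)) (r : 'rV['F_2]_n) :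
  r *m K^T = 0 <-> forall j, dotF2 (row j K) r = 0.
Proof.
have entry j : (r *m K^T) 0 j = dotF2 (row j K) r.
  by rewrite dotF2E mxE; apply: eq_bigr => l _; rewrite !mxE mulrC.
split=> [rK j|rK]; first by rewrite -entry rK mxE.
by apply/rowP => j; rewrite entry rK mxE.
Qed.

Lemma Zpow_fixP n (c : 'rV['F_2]_n) (u : 'cV[algC]_(2 ^ n)) :
  Zpow c *m u = u <-> forall s, u s 0 != 0 -> dotF2 c (bits_rv s) = 0.
Proof.
rewrite Zpow_diag mul_diag_mx; split=> [/matrixP fix_u s nz_us|orth].
  by apply/eqP; rewrite -signF2_eq1; apply/eqP/(mulIf nz_us); rewrite mul1r -{2}(fix_u s 0) !mxE.
apply/matrixP => s z; rewrite [z]ord1 !mxE.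
by have [->|/orth->] := eqVneq (u s 0) 0; rewrite ?mulr0 ?mul1r.
Qed.

Lemma bits_mul_inj k n (Gam : 'M['F_2]_(k, n)) :
  row_free Gam -> injective (fun x : 'I_(2 ^ k) => bits_rv x *m Gam).
Proof. by move=> freeGam x y /(row_free_inj freeGam)/bits_rv_inj. Qed.

Lemma basis_map_rangeP n k (Gam : 'M['F_2]_(k, n)) (u : 'cV[algC]_(2 ^ n)) :
  row_free Gam ->
  (exists y, u = basis_map Gam *m y) <-> forall s, u s 0 != 0 -> (bits_rv s <= Gam)%MS.
Proof.
move=> freeGam; split=> [[y ->] s|supp_u].
  rewrite mxE; apply: contraNT => not_sub; rewrite big1 // => x _; rewrite mxE.
  case: eqP => [def_s|_]; last by rewrite mul0r.
  by move: not_sub; rewrite def_s rv_indexK submxMl.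
exists (\col_x u (rv_index (bits_rv x *m Gam)) 0); apply/matrixP => s z; rewrite [z]ord1 !mxE.
have [us0|nz_us] := eqVneq (u s 0) 0.
  by rewrite us0 big1 // => x _; rewrite !mxE; case: eqP => [<-|_]; rewrite ?us0 ?mulr0 ?mul0r.
have /submxP[x' def_s] := supp_u s nz_us; pose x := rv_index x'.
have def_s' : s = rv_index (bits_rv x *m Gam) by rewrite rv_indexK -def_s bits_rvK.
rewrite (bigD1 x) //= !mxE -def_s' eqxx mul1r big1 ?addr0 // => y ne_yx; rewrite !mxE.
case: eqP => [def_sy|_]; last by rewrite mul0r.
by move: ne_yx; rewrite def_s' in def_sy; rewrite (bits_mul_inj freeGam (rv_index_inj def_sy)) eqxx.
Qed.

Lemma basis_map_isometry n k (Gam : 'M['F_2]_(k, n)) :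
  row_free Gam -> adjmx (basis_map Gam) *m basis_map Gam = 1%:M.
Proof.
move=> freeGam; rewrite basis_map_gram; apply/matrixP => x y; rewrite !mxE.
by congr (nat_of_bool _)%:R; apply/eqP/eqP => [/(bits_mul_inj freeGam)|->].
Qed.

Lemma codespace_conj_ZpowP n m (W : 'M[algC]_(2 ^ n)) (K : 'M['F_2]_(m, n))
    (v : 'cV[algC]_(2 ^ n)) : unitary W ->
  codespace (map (conj_Zpow W) (rows_seq K)) v <->
  forall j, Zpow (row j K) *m (adjmx W *m v) = adjmx W *m v.
Proof.
move=> unitaryW; split=> [/codespaceP fix_v j|fix_u].
  apply/(conj_Zpow_fixP _ _ unitaryW); have := fix_v j.
  by rewrite size_map size_rows_seq (nth_map 0) ?size_rows_seq // nth_rows_seq; apply.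
apply/codespaceP => i; rewrite size_map size_rows_seq => lt_i_m.
rewrite (nth_map 0) ?size_rows_seq // (nth_rows_seq K (Ordinal lt_i_m)).
exact/(conj_Zpow_fixP _ _ unitaryW).
Qed.

Section Encoder.
Variables (n k : nat) (W : 'M[algC]_(2 ^ n)) (Gam : 'M['F_2]_(k, n)) (C : 'M[algC]_(2 ^ k)).
Hypotheses (unitaryW : unitary W) (unitaryC : unitary C).

Let E := W *m basis_map Gam *m C.

Lemma scaled_isometry_row_free :
  (exists c : algC, c != 0 /\ adjmx (c *: E) *m (c *: E) = 1%:M) <-> row_free Gam.
Proof.
have gramE c : adjmx (c *: E) *m (c *: E) =
    (c^* * c) *: (adjmx C *m (adjmx (basis_map Gam) *m basis_map Gam) *m C).
  rewrite adjmxZ -scalemxAl -scalemxAr scalerA !adjmxM !mulmxA; congr (_ *: (_ *m _)).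
  by rewrite -!(mulmxA _ _ W) unitaryW mulmx1.
split=> [[c [nz_c]]|freeGam]; last first.
  by exists 1; rewrite oner_neq0 gramE basis_map_isometry // mulmx1 unitaryC conjC1 mulr1 scale1r.
rewrite gramE => /(congr1 (fun M => C *m M *m adjmx C)).
rewrite mulmx1 unitary_mul_adj // -scalemxAr -scalemxAl !mulmxA unitary_mul_adj // mul1mx.
rewrite -(mulmxA _ C) unitary_mul_adj // mulmx1 basis_map_gram => gram.
apply: inj_row_free => v vGam; apply: rv_index_inj; apply/eqP; apply: contraLR nz_c => ne_v0.
have /matrixP/(_ (rv_index v) (rv_index 0)) := gram.
rewrite !mxE !rv_indexK vGam mul0mx eqxx (negPf ne_v0) mulr1 => /eqP.
by rewrite mulf_eq0 conjC_eq0 orbb negbK.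
Qed.

Lemma enc_codespaceP (v : 'cV[algC]_(2 ^ n)) : row_free Gam ->
  (exists x, v = E *m x) <-> codespace (map (conj_Zpow W) (rows_seq (row_base (kermx Gam^T)))) v.
Proof.
move=> freeGam; set K := row_base (kermx Gam^T); set u := adjmx W *m v.
have def_v : v = W *m u by rewrite /u mulmxA unitary_mul_adj // mul1mx.
have rangeE : (exists x, v = E *m x) <-> exists y, u = basis_map Gam *m y.
  split=> [[x def_v']|[y def_u]].
    by exists (C *m x); rewrite /u def_v' /E !mulmxA unitaryW mul1mx.
  by exists (adjmx C *m y); rewrite def_v def_u /E -!mulmxA (mulmxA C) unitary_mul_adj // mul1mx.
have rowspaceK r : (r <= Gam)%MS <-> forall j, dotF2 (row j K) r = 0.
  rewrite (sub_row_space_orth _ (eq_row_base _)).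
  by split=> [/eqP/mul_trmx_eq0P|/mul_trmx_eq0P/eqP].
apply: (iff_trans rangeE); apply: (iff_trans (basis_map_rangeP _ freeGam)).
apply: iff_sym; apply: (iff_trans (codespace_conj_ZpowP _ _ unitaryW)); rewrite -/u.
split=> [fix_u s nz_us|supp_u j]; last by apply/Zpow_fixP => s /supp_u/rowspaceK.
by apply/rowspaceK => j; apply: (iffLR (Zpow_fixP _ _) (fix_u j)).
Qed.

End Encoder.

Unset Implicit Arguments.
Set Strict Implicit.

Theorem proposition2 (n k : nat) (hk : (1 <= k)%N) (hkn : (k < n)%N)
  (G : 'M['F_2]_n) (hG : simple_graph G) (Gam : 'M['F_2]_(k, n))
  (C : 'M[algC]_(2 ^ k)) (hC : clifford k C)
  (L : 'I_n -> 'M[algC]_2) (hL : forall j, clifford 1 (L j)) :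
  valid_stabilizer_encoder n k (tens L *m enc G Gam *m C) <-> \rank Gam = k.
Proof.
have unitaryW : unitary (enc_frame G L) by apply: unitary_enc_frame => j; case: (hL j).
have unitaryC : unitary C by case: hC.
have -> : tens L *m enc G Gam *m C = enc_frame G L *m basis_map Gam *m C.
  by rewrite enc_decomp /enc_frame !mulmxA.
split=> [[isoE _]|/eqP freeGam]; first exact/eqP/(scaled_isometry_row_free _ unitaryW unitaryC).
split; first exact/(scaled_isometry_row_free _ unitaryW unitaryC).
exists (map (conj_Zpow (enc_frame G L)) (rows_seq (row_base (kermx Gam^T)))).
split; last by move=> v; apply: enc_codespaceP.
apply: stabilizer_gens_conj_Zpow; rewrite ?row_base_free //.
- by rewrite mxrank_ker mxrank_tr (eqP freeGam).
- by move=> c; apply: pauli_conj_Zpow_enc_frame.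
Qed.
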